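(* In the linear setting of the context, suppose $f(\phi_{\min})<0$. Then for every $A>0$ and every $Q_A\in\mathbb R$, setting $z=Q_A/A$, the linear pump-leak system has a unique steady state $(\mathbf c^*,v^*,\phi^* )$; the map $(A,Q_A)\mapsto v^*$ is $C^1$ on $(0,\infty)\times\mathbb R$ and $$\frac{\partial v^*}{\partial A}=\Big(\big(\tfrac{Q_A}{v^*}\big)^2+f''(\phi^* )\tfrac{A}{v^*}\Big)^{-1}f''(\phi^* )>0,\qquad \frac{\partial v^*}{\partial Q_A}=\Big(\big(\tfrac{Q_A}{v^*}\big)^2+f''(\phi^* )\tfrac{A}{v^*}\Big)^{-1}\frac{Q_A}{v^*}.$$
   Context: Fix an integer $N\ge2$, real valences $z_1,\dots,z_N$ not all zero, positive constants $c_1^{\rm e},\dots,c_N^{\rm e}$ with $\sum_kz_kc_k^{\rm e}=0$. Let $L$ be a real symmetric positive definite $N\times N$ matrix, $\mathbf p\in\mathbb R^N$ constant, $\zeta>0$, $\mathbf q=L^{-1}\mathbf p$, and $f(\phi)=\sum_k c_k^{\rm e}(\exp(-q_k-z_k\phi)-1)$, which has a unique minimizer $\phi_{\min}$ on $\mathbb R$. For $A>0$ and real $z$, and $\mathbf c\in(0,\infty)^N$, $v>0$, $\phi\in\mathbb R$, set $\mu_k=\ln(c_k/c_k^{\rm e})+z_k\phi$, $\pi_{\rm w}=\sum_kc_k^{\rm e}-(\sum_kc_k+A/v)$. The linear pump-leak system is $\frac{d}{dt}(v\mathbf c)=-L\boldsymbol\mu-\mathbf p$, $0=\sum_kz_kc_k+zA/v$,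 $\frac{dv}{dt}=-\zeta\pi_{\rm w}$; a steady state is a point $(\mathbf c,v,\phi)\in(0,\infty)^N\times(0,\infty)\times\mathbb R$ with $\sum_kz_kc_k+zA/v=0$, $L\boldsymbol\mu+\mathbf p=0$, $\pi_{\rm w}=0$. *)

(* classical reals. Vectors in R^N are functions nat -> R,
   only their values at indices 0..N-1 matter; matrices are nat -> nat -> R. *)
From Stdlib Require Import Reals Lra Lia.
Open Scope R_scope.

Fixpoint sumN (n : nat) (g : nat -> R) : R :=
  match n with
  | O => 0
  | S m => sumN m g + g m
  end.

Definition fpot (N : nat) (z ce q : nat -> R) (phi : R) : R :=
  sumN N (fun k => ce k * (exp (- q k - z k * phi) - 1)).

(* f''(phi) = sum_k ce_k z_k^2 exp(-q_k - z_k phi)  (explicit second derivative of fpot) *)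
Definition fpot2 (N : nat) (z ce q : nat -> R) (phi : R) : R :=
  sumN N (fun k => ce k * (z k)^2 * exp (- q k - z k * phi)).

Definition mu (z ce c : nat -> R) (phi : R) (k : nat) : R :=
  ln (c k / ce k) + z k * phi.

Definition piw (N : nat) (ce c : nat -> R) (A v : R) : R :=
  sumN N ce - (sumN N c + A / v).

(* steady state of the linear pump-leak system with parameters A, z (impermeant) *)
Definition steady_state (N : nat) (z ce : nat -> R) (L : nat -> nat -> R)
    (p : nat -> R) (A zA : R) (c : nat -> R) (v phi : R) : Prop :=
  (forall k, (k < N)%nat -> 0 < c k) /\ 0 < v /\
  sumN N (fun k => z k * c k) + zA * A / v = 0 /\
  (forall i, (i < N)%nat -> sumN N (fun j => L i j * mu z ce c phi j) + p i = 0) /\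
  piw N ce c A v = 0.

Definition continuous2_at (g : R -> R -> R) (a b : R) : Prop :=
  forall eps, 0 < eps -> exists delta, 0 < delta /\
    forall a' b', Rabs (a' - a) < delta -> Rabs (b' - b) < delta ->
      Rabs (g a' b' - g a b) < eps.

(* Positive definiteness of [L] forces [mu = -q] at a steady state, so the concentrations are
   Boltzmann distributed, [c_k = ce_k exp (-q_k - z_k phi)].  Osmotic balance then reads
   [A / v = - f phi] and electroneutrality [f' phi = z A / v], so [phi] solves
   [f' phi / - f phi = z] with [f phi < 0].  Both signs of valence occur, hence the strictly
   convex [f] is positive far out on both sides, and [f' / - f] is a strictly increasing
   bijection from the interval [f < 0] onto [R].  Its inverse is differentiable by the inverse
   function theorem, and [v = A / - f (phi (Q_A / A))] is differentiated by the chain rule. *)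

From Stdlib Require Import Reals Ranalysis5 Lra Lia ClassicalEpsilon.
From Coquelicot Require Import Coquelicot.
Set Bullet Behavior "Strict Subproofs".
Open Scope R_scope.

Lemma sumN_ext n g h : (forall k, (k < n)%nat -> g k = h k) -> sumN n g = sumN n h.
Proof. induction n as [|n IH]; simpl; intros E; [reflexivity|]. rewrite IH, E; auto. Qed.

Lemma sumN_plus n g h : sumN n (fun k => g k + h k) = sumN n g + sumN n h.
Proof. induction n as [|n IH]; simpl; [lra|rewrite IH; lra]. Qed.

Lemma sumN_scal n c g : sumN n (fun k => c * g k) = c * sumN n g.
Proof. induction n as [|n IH]; simpl; [lra|rewrite IH; lra]. Qed.

Lemma sumN_opp n g : sumN n (fun k => - g k) = - sumN n g.
Proof. induction n as [|n IH]; simpl; [lra|rewrite IH; lra]. Qed.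

Lemma sumN_nonneg n g : (forall k, (k < n)%nat -> 0 <= g k) -> 0 <= sumN n g.
Proof.
  induction n as [|n IH]; simpl; intros Hg; [lra|].
  assert (0 <= g n) by auto. assert (0 <= sumN n g) by auto. lra.
Qed.

Lemma sumN_ge_term n g k0 : (forall k, (k < n)%nat -> 0 <= g k) -> (k0 < n)%nat ->
  g k0 <= sumN n g.
Proof.
  induction n as [|n IH]; simpl; intros Hg Hk; [lia|].
  destruct (Nat.eq_dec k0 n) as [->|Hne].
  - assert (0 <= sumN n g) by (apply sumN_nonneg; auto). lra.
  - assert (g k0 <= sumN n g) by (apply IH; auto; lia). assert (0 <= g n) by auto. lra.
Qed.

Lemma derivable_pt_lim_sumN n (g g' : nat -> R -> R) x :
  (forall k, (k < n)%nat -> derivable_pt_lim (g k) x (g' k x)) ->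
  derivable_pt_lim (fun y => sumN n (fun k => g k y)) x (sumN n (fun k => g' k x)).
Proof.
  induction n as [|n IH]; simpl; intros D.
  - apply derivable_pt_lim_const.
  - apply (derivable_pt_lim_plus (fun y => sumN n (fun k => g k y)) (g n)); auto.
Qed.

Lemma continuity_pt_of_derivable_pt_lim f x l : derivable_pt_lim f x l -> continuity_pt f x.
Proof. intros D. apply derivable_continuous_pt. exists l. exact D. Qed.

Lemma increasing_of_derivative_pos g g' x y : x < y ->
  (forall c, x <= c <= y -> derivable_pt_lim g c (g' c)) ->
  (forall c, x < c < y -> 0 < g' c) -> g x < g y.
Proof.
  intros Hxy D P. destruct (MVT_cor2 g g' x y Hxy D) as [c [E Hc]].
  assert (0 < g' c * (y - x)) by (apply Rmult_lt_0_compat; auto; lra). lra.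
Qed.

Lemma derivable_pt_lim_div_opp f g x df dg :
  derivable_pt_lim f x df -> derivable_pt_lim g x dg -> g x <> 0 ->
  derivable_pt_lim (fun y => f y / - g y) x ((f x * dg - df * g x) / g x ^ 2).
Proof.
  intros Df Dg Hg.
  assert (Hg' : - g x <> 0) by lra.
  pose proof (derivable_pt_lim_div f (fun y => - g y) x df (- dg) Df
    (derivable_pt_lim_opp g x dg Dg) Hg') as D.
  replace ((f x * dg - df * g x) / g x ^ 2) with ((df * - g x - - dg * f x) / (- g x)²)
    by (unfold Rsqr; field; exact Hg).
  exact D.
Qed.

Lemma continuous2_at_comp_div (k : R -> R) A Q : A <> 0 -> continuity_pt k (Q / A) ->
  continuous2_at (fun a b => k (b / a)) A Q.
Proof.
  intros HA Ck.
  assert (C : continuity_2d_pt (fun a b => k (b / a)) A Q).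
  { apply (continuity_1d_2d_pt_comp k (fun a b => b / a)); [exact Ck|].
    apply continuity_2d_pt_mult; [apply continuity_2d_pt_id2|].
    apply continuity_2d_pt_inv; [apply continuity_2d_pt_id1|exact HA]. }
  intros eps Heps. destruct (C (mkposreal eps Heps)) as [d Hd].
  exists d. split; [apply cond_pos|]. exact Hd.
Qed.

Section StrictlyConvex.

Variables F F1 F2 : R -> R.
Hypothesis F_deriv : forall x, derivable_pt_lim F x (F1 x).
Hypothesis F1_deriv : forall x, derivable_pt_lim F1 x (F2 x).
Hypothesis F2_pos : forall x, 0 < F2 x.

Lemma F_continuous : continuity F.
Proof. intros x. exact (continuity_pt_of_derivable_pt_lim _ _ _ (F_deriv x)). Qed.

Lemma F1_continuous : continuity F1.
Proof. intros x. exact (continuity_pt_of_derivable_pt_lim _ _ _ (F1_deriv x)). Qed.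

Lemma F1_increasing x y : x < y -> F1 x < F1 y.
Proof. intros Hxy. apply (increasing_of_derivative_pos F1 F2); auto. Qed.

Lemma F_strictly_convex x t y : x < t < y ->
  (y - x) * F t < (y - t) * F x + (t - x) * F y.
Proof.
  intros [Hxt Hty].
  destruct (MVT_cor2 F F1 x t Hxt (fun c _ => F_deriv c)) as [c1 [E1 Hc1]].
  destruct (MVT_cor2 F F1 t y Hty (fun c _ => F_deriv c)) as [c2 [E2 Hc2]].
  assert (F1 c1 < F1 c2) by (apply F1_increasing; lra).
  assert (0 < (t - x) * (y - t) * (F1 c2 - F1 c1))
    by (repeat apply Rmult_lt_0_compat; lra).
  nra.
Qed.

Lemma F_neg_inside x t y : x < t < y -> F x <= 0 -> F y <= 0 -> F t < 0.
Proof.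
  intros Ht Hx Hy. pose proof (F_strictly_convex x t y Ht).
  assert ((y - t) * F x <= 0) by (apply Rmult_le_0_l; lra).
  assert ((t - x) * F y <= 0) by (apply Rmult_le_0_l; lra).
  nra.
Qed.

Lemma F_neg_segment x t y : x <= t <= y -> F x < 0 -> F y < 0 -> F t < 0.
Proof.
  intros [[Hxt| <-] [Hty| ->]] Hx Hy; auto.
  apply (F_neg_inside x t y); lra.
Qed.

Definition neg_log_slope s := F1 s / - F s.

(* [F^2] times the derivative of [neg_log_slope]; at a steady state this is the [D] of the
   statement (lemma [volume_Dterm]). *)
Definition Dterm s := F1 s ^ 2 - F2 s * F s.

Lemma Dterm_pos t : F t < 0 -> 0 < Dterm t.
Proof. intros Ht. pose proof (F2_pos t). unfold Dterm. nra. Qed.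

Lemma neg_log_slope_deriv t : F t < 0 ->
  derivable_pt_lim neg_log_slope t (Dterm t / F t ^ 2).
Proof.
  intros Ht.
  pose proof (derivable_pt_lim_div_opp F1 F t (F2 t) (F1 t) (F1_deriv t) (F_deriv t)
    ltac:(lra)) as D.
  replace (Dterm t / F t ^ 2) with ((F1 t * F1 t - F2 t * F t) / F t ^ 2)
    by (unfold Dterm; field; lra).
  exact D.
Qed.

Lemma neg_log_slope_increasing x y : x < y -> F x < 0 -> F y < 0 ->
  neg_log_slope x < neg_log_slope y.
Proof.
  intros Hxy Hx Hy.
  apply (increasing_of_derivative_pos _ (fun t => Dterm t / F t ^ 2)); auto.
  - intros c Hc. apply neg_log_slope_deriv. apply (F_neg_segment x c y); auto.
  - intros c Hc. assert (F c < 0) by (apply (F_neg_segment x c y); auto; lra).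
    apply Rdiv_lt_0_compat; [apply Dterm_pos; auto|nra].
Qed.

Lemma neg_log_slope_inj x y : F x < 0 -> F y < 0 ->
  neg_log_slope x = neg_log_slope y -> x = y.
Proof.
  intros Hx Hy E. destruct (Rtotal_order x y) as [H|[H|H]]; auto.
  - pose proof (neg_log_slope_increasing x y H Hx Hy). lra.
  - pose proof (neg_log_slope_increasing y x H Hy Hx). lra.
Qed.

Variables m x0 M : R.
Hypothesis m_lt_x0 : m < x0.
Hypothesis x0_lt_M : x0 < M.
Hypothesis F_m_pos : 0 < F m.
Hypothesis F_x0_neg : F x0 < 0.
Hypothesis F_M_pos : 0 < F M.

(* The sublevel set [F < 0] is an interval [(a, b)] with [F a = F b = 0]; there [F1 a < 0 < F1 b],
   so [F1 + w F] changes sign on [[a, b]] for every [w]. *)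
Lemma neg_log_slope_surj w : exists t, F t < 0 /\ neg_log_slope t = w.
Proof.
  destruct (IVT F x0 M F_continuous x0_lt_M F_x0_neg F_M_pos) as [b [Hb Fb]].
  destruct (IVT (fun s => - F s) m x0 (continuity_opp F F_continuous) m_lt_x0
    ltac:(lra) ltac:(lra)) as [a [Ha Fa]]; cbv beta in Fa.
  assert (b <> x0) by (intros ->; lra). assert (a <> x0) by (intros ->; lra).
  destruct (MVT_cor2 F F1 x0 b ltac:(lra) (fun c _ => F_deriv c)) as [c [Ec Hc]].
  destruct (MVT_cor2 F F1 a x0 ltac:(lra) (fun c _ => F_deriv c)) as [c' [Ec' Hc']].
  assert (F1_b_pos : 0 < F1 b).
  { assert (0 < F1 c) by nra. pose proof (F1_increasing c b ltac:(lra)). lra. }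
  assert (F1_a_neg : F1 a < 0).
  { assert (F1 c' < 0) by nra. pose proof (F1_increasing a c' ltac:(lra)). lra. }
  set (k := fun s => F1 s + w * F s).
  assert (Ck : continuity k)
    by (apply continuity_plus; [apply F1_continuous|apply continuity_scal, F_continuous]).
  assert (a < b) by lra. assert (k a < 0) by (unfold k; nra). assert (0 < k b) by (unfold k; nra).
  destruct (IVT k a b Ck ltac:(lra) ltac:(lra) ltac:(lra)) as [t [Ht Et]].
  assert (Hab : a < t < b).
  { split; apply Rnot_le_lt; intros Hle.
    - assert (t = a) by lra. subst t. lra.
    - assert (t = b) by lra. subst t. lra. }
  assert (F t < 0) by (apply (F_neg_inside a t b); lra).
  exists t. split; auto. unfold neg_log_slope, k in *.
  replace (F1 t) with (w * - F t) by lra. field. lra.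
Qed.

Definition neg_log_slope_inv (w : R) : R :=
  proj1_sig (constructive_indefinite_description _ (neg_log_slope_surj w)).

Lemma neg_log_slope_inv_spec w :
  F (neg_log_slope_inv w) < 0 /\ neg_log_slope (neg_log_slope_inv w) = w.
Proof. exact (proj2_sig (constructive_indefinite_description _ (neg_log_slope_surj w))). Qed.

Lemma neg_log_slope_invK t : F t < 0 -> neg_log_slope_inv (neg_log_slope t) = t.
Proof.
  intros Ht. destruct (neg_log_slope_inv_spec (neg_log_slope t)) as [Hn E].
  apply neg_log_slope_inj; auto.
Qed.

Lemma neg_log_slope_inv_increasing w1 w2 : w1 < w2 ->
  neg_log_slope_inv w1 < neg_log_slope_inv w2.
Proof.
  intros Hw.
  destruct (neg_log_slope_inv_spec w1) as [H1 E1].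
  destruct (neg_log_slope_inv_spec w2) as [H2 E2].
  destruct (Rtotal_order (neg_log_slope_inv w1) (neg_log_slope_inv w2)) as [h|[h|h]]; auto.
  - rewrite h in E1. lra.
  - pose proof (neg_log_slope_increasing _ _ h H2 H1). lra.
Qed.

Lemma F_neg_near_inv w t : neg_log_slope_inv (w - 1) <= t <= neg_log_slope_inv (w + 1) ->
  F t < 0.
Proof.
  intros Ht. apply (F_neg_segment _ t _ Ht);
    [apply (neg_log_slope_inv_spec (w - 1))|apply (neg_log_slope_inv_spec (w + 1))].
Qed.

Lemma neg_log_slope_inv_continuous w : continuity_pt neg_log_slope_inv w.
Proof.
  pose proof (neg_log_slope_inv_increasing (w - 1) w ltac:(lra)).
  pose proof (neg_log_slope_inv_increasing w (w + 1) ltac:(lra)).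
  apply (continuity_pt_recip_prelim neg_log_slope _ _ _
    (neg_log_slope_inv_increasing (w - 1) (w + 1) ltac:(lra))).
  - intros x y Hx Hxy Hy.
    apply neg_log_slope_increasing; auto; apply (F_neg_near_inv w); lra.
  - intros x Hx. apply neg_log_slope_invK, (F_neg_near_inv w x Hx).
  - intros a Ha. apply (continuity_pt_of_derivable_pt_lim _ _ _
      (neg_log_slope_deriv a (F_neg_near_inv w a Ha))).
  - rewrite (proj2 (neg_log_slope_inv_spec (w - 1))), (proj2 (neg_log_slope_inv_spec (w + 1))).
    lra.
Qed.

Lemma neg_log_slope_inv_deriv w :
  derivable_pt_lim neg_log_slope_inv w
    (F (neg_log_slope_inv w) ^ 2 / Dterm (neg_log_slope_inv w)).
Proof.
  set (t := neg_log_slope_inv w).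
  pose proof (neg_log_slope_inv_increasing (w - 1) w ltac:(lra)).
  pose proof (neg_log_slope_inv_increasing w (w + 1) ltac:(lra)).
  assert (Ht : neg_log_slope_inv (w - 1) <= t <= neg_log_slope_inv (w + 1)) by (unfold t; lra).
  pose proof (F_neg_near_inv w t Ht) as Ft.
  set (Prf := fun a Ha => exist _ _ (neg_log_slope_deriv a (F_neg_near_inv w a Ha))
    : derivable_pt neg_log_slope a).
  assert (Dt : derive_pt neg_log_slope t (Prf t Ht) = Dterm t / F t ^ 2)
    by (apply derive_pt_eq_0, neg_log_slope_deriv, Ft).
  assert (0 < Dterm t / F t ^ 2) by (apply Rdiv_lt_0_compat; [apply Dterm_pos; auto|nra]).
  pose proof (derivable_pt_lim_recip_interv neg_log_slope neg_log_slope_inv (w - 1) (w + 1) w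
    Prf (neg_log_slope_inv_continuous w) ltac:(lra) ltac:(lra) Ht) as D.
  fold t in D. rewrite Dt in D.
  replace (F t ^ 2 / Dterm t) with (1 / (Dterm t / F t ^ 2))
    by (pose proof (Dterm_pos t Ft); field; split; lra).
  apply D.
  - intros x Hx. apply (neg_log_slope_inv_spec x).
  - lra.
Qed.


Definition volume A Q := A / - F (neg_log_slope_inv (Q / A)).

Definition volume_dA A Q := F2 (neg_log_slope_inv (Q / A)) / Dterm (neg_log_slope_inv (Q / A)).

Definition volume_dQ A Q := F1 (neg_log_slope_inv (Q / A)) / Dterm (neg_log_slope_inv (Q / A)).

Lemma F1_at_inv A Q : 0 < A ->
  F1 (neg_log_slope_inv (Q / A)) = Q / A * - F (neg_log_slope_inv (Q / A)).
Proof.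
  intros HA. destruct (neg_log_slope_inv_spec (Q / A)) as [Hn E].
  set (t := neg_log_slope_inv (Q / A)) in *.
  unfold neg_log_slope in E. rewrite <- E. field. lra.
Qed.

Lemma volume_deriv_A A Q : 0 < A ->
  derivable_pt_lim (fun a => volume a Q) A (volume_dA A Q).
Proof.
  intros HA. set (t := neg_log_slope_inv (Q / A)).
  pose proof (F1_at_inv A Q HA) as E1. fold t in E1.
  assert (Ft : F t < 0) by apply neg_log_slope_inv_spec.
  pose proof (Dterm_pos t Ft).
  assert (Dw : derivable_pt_lim (fun a => Q / a) A (- Q / A ^ 2))
    by (apply is_derive_Reals; auto_derive; [lra|field; lra]).
  pose proof (derivable_pt_lim_comp _ _ _ _ _ Dw (neg_log_slope_inv_deriv (Q / A))) as Dt.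
  pose proof (derivable_pt_lim_comp _ _ _ _ _ Dt (F_deriv t)) as DF.
  pose proof (derivable_pt_lim_div_opp id _ A 1 _ (derivable_pt_lim_id A) DF
    ltac:(unfold comp; fold t; lra)) as D.
  unfold volume_dA. fold t. unfold volume.
  match type of D with derivable_pt_lim _ _ ?l => replace (F2 t / Dterm t) with l end.
  - exact D.
  - unfold comp, id. fold t. replace Q with (A * F1 t / - F t) by (rewrite E1; field; lra).
    unfold Dterm in *. field. lra.
Qed.

Lemma volume_deriv_Q A Q : 0 < A ->
  derivable_pt_lim (fun b => volume A b) Q (volume_dQ A Q).
Proof.
  intros HA. set (t := neg_log_slope_inv (Q / A)).
  assert (Ft : F t < 0) by apply neg_log_slope_inv_spec.
  pose proof (Dterm_pos t Ft).
  assert (Dw : derivable_pt_lim (fun b => b / A) Q (/ A))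
    by (apply is_derive_Reals; auto_derive; [exact I|field; lra]).
  pose proof (derivable_pt_lim_comp _ _ _ _ _ Dw (neg_log_slope_inv_deriv (Q / A))) as Dt.
  pose proof (derivable_pt_lim_comp _ _ _ _ _ Dt (F_deriv t)) as DF.
  pose proof (derivable_pt_lim_div_opp (fct_cte A) _ Q 0 _ (derivable_pt_lim_const A Q) DF
    ltac:(unfold comp; fold t; lra)) as D.
  unfold volume_dQ. fold t. unfold volume.
  match type of D with derivable_pt_lim _ _ ?l => replace (F1 t / Dterm t) with l end.
  - exact D.
  - unfold comp, fct_cte. fold t. field. lra.
Qed.

Lemma volume_Dterm A Q : 0 < A ->
  (Q / volume A Q) ^ 2 + F2 (neg_log_slope_inv (Q / A)) * (A / volume A Q)
  = Dterm (neg_log_slope_inv (Q / A)).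
Proof.
  intros HA. pose proof (F1_at_inv A Q HA) as E1. unfold volume.
  set (t := neg_log_slope_inv (Q / A)) in *.
  assert (Ft : F t < 0) by apply neg_log_slope_inv_spec.
  unfold Dterm. rewrite E1. field. lra.
Qed.

Lemma volume_deriv_closed_form A Q : 0 < A ->
  let t := neg_log_slope_inv (Q / A) in
  let D := (Q / volume A Q) ^ 2 + F2 t * (A / volume A Q) in
  volume_dA A Q = / D * F2 t /\ 0 < volume_dA A Q /\ volume_dQ A Q = / D * (Q / volume A Q).
Proof.
  intros HA t D. unfold D. rewrite volume_Dterm by exact HA. fold t.
  pose proof (F1_at_inv A Q HA) as E1. fold t in E1.
  assert (Ft : F t < 0) by apply neg_log_slope_inv_spec.
  pose proof (Dterm_pos t Ft).
  unfold volume_dA, volume_dQ, volume. fold t.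
  split; [|split].
  - unfold Rdiv. ring.
  - apply Rdiv_lt_0_compat; auto.
  - rewrite E1. field. lra.
Qed.

Hypothesis F2_continuous : continuity F2.

Lemma Dterm_continuous : continuity Dterm.
Proof.
  intros s. apply (continuity_pt_ext (fun s => F1 s * F1 s - F2 s * F s));
    [intros x; unfold Dterm; ring|].
  apply continuity_pt_minus; apply continuity_pt_mult;
    auto using F_continuous, F1_continuous.
Qed.

Lemma continuous2_at_volume_deriv (G : R -> R) A Q : continuity G -> 0 < A ->
  continuous2_at (fun a b => G (neg_log_slope_inv (b / a)) / Dterm (neg_log_slope_inv (b / a)))
    A Q.
Proof.
  intros CG HA.
  apply (continuous2_at_comp_div (fun w => G (neg_log_slope_inv w) / Dterm (neg_log_slope_inv w)));
    [lra|].
  apply (continuity_pt_comp neg_log_slope_inv (fun s => G s / Dterm s)).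
  - apply neg_log_slope_inv_continuous.
  - apply continuity_pt_div; [apply CG|apply Dterm_continuous|].
    assert (Hneg : F (neg_log_slope_inv (Q / A)) < 0) by apply neg_log_slope_inv_spec.
    pose proof (Dterm_pos _ Hneg). lra.
Qed.

End StrictlyConvex.

Definition fpot1 (N : nat) (z ce q : nat -> R) (phi : R) : R :=
  sumN N (fun k => - (ce k * z k * exp (- q k - z k * phi))).

Definition boltzmann (z ce q : nat -> R) (phi : R) (k : nat) : R :=
  ce k * exp (- q k - z k * phi).

Section Potential.

Variables (N : nat) (z ce q : nat -> R).
Hypothesis ce_pos : forall k, (k < N)%nat -> 0 < ce k.

Lemma fpot_deriv x : derivable_pt_lim (fpot N z ce q) x (fpot1 N z ce q x).
Proof.
  apply (derivable_pt_lim_sumN N (fun k y => ce k * (exp (- q k - z k * y) - 1))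
    (fun k x => - (ce k * z k * exp (- q k - z k * x)))).
  intros k _. apply is_derive_Reals. auto_derive; [exact I|unfold Rminus; ring].
Qed.

Lemma fpot1_deriv x : derivable_pt_lim (fpot1 N z ce q) x (fpot2 N z ce q x).
Proof.
  apply (derivable_pt_lim_sumN N (fun k y => - (ce k * z k * exp (- q k - z k * y)))
    (fun k x => ce k * z k ^ 2 * exp (- q k - z k * x))).
  intros k _. apply is_derive_Reals. auto_derive; [exact I|unfold Rminus; ring].
Qed.

Lemma fpot2_continuous : continuity (fpot2 N z ce q).
Proof.
  intros x. apply (continuity_pt_of_derivable_pt_lim _ _
    (sumN N (fun k => - (ce k * z k ^ 3 * exp (- q k - z k * x))))).
  apply (derivable_pt_lim_sumN N (fun k y => ce k * z k ^ 2 * exp (- q k - z k * y))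
    (fun k x => - (ce k * z k ^ 3 * exp (- q k - z k * x)))).
  intros k _. apply is_derive_Reals. auto_derive; [exact I|unfold Rminus; ring].
Qed.

Lemma fpot2_pos : (exists k, (k < N)%nat /\ z k <> 0) -> forall x, 0 < fpot2 N z ce q x.
Proof.
  intros [k0 [Hk0 Hz0]] x. unfold fpot2.
  assert (Hterm : forall k, (k < N)%nat -> 0 <= ce k * z k ^ 2 * exp (- q k - z k * x)).
  { intros k Hk. pose proof (ce_pos k Hk). pose proof (exp_pos (- q k - z k * x)).
    pose proof (pow2_ge_0 (z k)). apply Rmult_le_pos; [apply Rmult_le_pos|]; lra. }
  eapply Rlt_le_trans; [|apply (sumN_ge_term _ _ k0 Hterm Hk0)].
  pose proof (ce_pos k0 Hk0). pose proof (exp_pos (- q k0 - z k0 * x)).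
  assert (0 < z k0 ^ 2) by (pose proof (Rsqr_pos_lt _ Hz0); unfold Rsqr in *; simpl; lra).
  apply Rmult_lt_0_compat; [apply Rmult_lt_0_compat|]; lra.
Qed.

Lemma sumN_boltzmann phi : sumN N (boltzmann z ce q phi) = fpot N z ce q phi + sumN N ce.
Proof.
  unfold fpot. rewrite <- sumN_plus. apply sumN_ext. intros k _. unfold boltzmann. ring.
Qed.

Lemma sumN_z_boltzmann phi :
  sumN N (fun k => z k * boltzmann z ce q phi k) = - fpot1 N z ce q phi.
Proof.
  unfold fpot1. rewrite <- sumN_opp. apply sumN_ext. intros k _. unfold boltzmann. ring.
Qed.

Lemma fpot_pos_of_exponent k x : (k < N)%nat ->
  sumN N ce / ce k <= - q k - z k * x -> 0 < fpot N z ce q x.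
Proof.
  intros Hk Hx.
  assert (Hterm : forall j, (j < N)%nat -> 0 <= boltzmann z ce q x j).
  { intros j Hj. pose proof (ce_pos j Hj). pose proof (exp_pos (- q j - z j * x)).
    unfold boltzmann. nra. }
  pose proof (sumN_ge_term _ _ k Hterm Hk) as Hge. rewrite sumN_boltzmann in Hge.
  unfold boltzmann in Hge.
  pose proof (exp_ineq1_le (- q k - z k * x)). pose proof (ce_pos k Hk).
  assert (sumN N ce <= ce k * (- q k - z k * x)).
  { replace (sumN N ce) with (ce k * (sumN N ce / ce k)) by (field; lra).
    apply Rmult_le_compat_l; lra. }
  nra.
Qed.

Lemma fpot_pos_above x0 : (exists k, (k < N)%nat /\ z k < 0) ->
  exists M, x0 < M /\ 0 < fpot N z ce q M.
Proof.
  intros [k [Hk Hzk]].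
  set (b := (- q k - sumN N ce / ce k) / z k).
  exists (Rmax (x0 + 1) b). split.
  - pose proof (Rmax_l (x0 + 1) b). lra.
  - apply (fpot_pos_of_exponent k _ Hk).
    pose proof (Rmax_r (x0 + 1) b).
    pose proof (ce_pos k Hk).
    assert (z k * b = - q k - sumN N ce / ce k) by (unfold b; field; lra).
    nra.
Qed.

End Potential.

Lemma fpot_reflect N z ce q x : fpot N (fun k => - z k) ce q (- x) = fpot N z ce q x.
Proof. apply sumN_ext. intros k _. do 3 f_equal. ring. Qed.

Lemma fpot_pos_below N z ce q x0 : (forall k, (k < N)%nat -> 0 < ce k) ->
  (exists k, (k < N)%nat /\ 0 < z k) -> exists m, m < x0 /\ 0 < fpot N z ce q m.
Proof.
  intros Hce [k [Hk Hzk]].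
  destruct (fpot_pos_above N (fun k => - z k) ce q Hce (- x0)) as [M [HM FM]].
  { exists k. split; [exact Hk|lra]. }
  exists (- M). split; [lra|]. rewrite <- fpot_reflect, Ropp_involutive. exact FM.
Qed.

Lemma exists_neg_valence N z ce : (forall k, (k < N)%nat -> 0 < ce k) ->
  (exists k, (k < N)%nat /\ z k <> 0) -> sumN N (fun k => z k * ce k) = 0 ->
  exists k, (k < N)%nat /\ z k < 0.
Proof.
  intros Hce [k0 [Hk0 Hz0]] Hsum.
  destruct (classic (exists k, (k < N)%nat /\ z k < 0)) as [|Hno]; [assumption|exfalso].
  assert (Hterm : forall k, (k < N)%nat -> 0 <= z k * ce k).
  { intros k Hk. destruct (Rlt_or_le (z k) 0) as [Hlt|Hle].
    - exfalso. apply Hno. exists k. auto.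
    - pose proof (Hce k Hk). nra. }
  pose proof (sumN_ge_term _ _ k0 Hterm Hk0). pose proof (Hterm k0 Hk0).
  pose proof (Hce k0 Hk0).
  assert (Hzero : z k0 * ce k0 = 0) by lra.
  destruct (Rmult_integral _ _ Hzero); lra.
Qed.

Lemma exists_pos_valence N z ce : (forall k, (k < N)%nat -> 0 < ce k) ->
  (exists k, (k < N)%nat /\ z k <> 0) -> sumN N (fun k => z k * ce k) = 0 ->
  exists k, (k < N)%nat /\ 0 < z k.
Proof.
  intros Hce [k0 [Hk0 Hz0]] Hsum.
  destruct (exists_neg_valence N (fun k => - z k) ce Hce) as [k [Hk Hzk]].
  - exists k0. split; [exact Hk0|lra].
  - rewrite (sumN_ext N _ (fun k => - (z k * ce k))), sumN_opp, Hsum by (intros; ring). ring.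
  - exists k. split; [exact Hk|lra].
Qed.

Lemma kernel_trivial_of_pos_def N (L : nat -> nat -> R) :
  (forall x : nat -> R, (exists i, (i < N)%nat /\ x i <> 0) ->
     0 < sumN N (fun i => sumN N (fun j => x i * L i j * x j))) ->
  forall x, (forall i, (i < N)%nat -> sumN N (fun j => L i j * x j) = 0) ->
  forall i, (i < N)%nat -> x i = 0.
Proof.
  intros Hpd x Hx i Hi. apply NNPP. intros Hne.
  pose proof (Hpd x (ex_intro _ i (conj Hi Hne))) as P.
  rewrite (sumN_ext N _ (fun i => 0 * x i)) in P.
  - rewrite sumN_scal in P. lra.
  - intros k Hk. rewrite Rmult_0_l, <- (Rmult_0_r (x k)), <- (Hx k Hk), <- sumN_scal.
    apply sumN_ext. intros j _. ring.
Qed.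

Lemma mu_eq_iff_boltzmann z ce q c phi k : 0 < ce k -> 0 < c k ->
  mu z ce c phi k = - q k <-> c k = boltzmann z ce q phi k.
Proof.
  intros Hce Hc. unfold mu, boltzmann. split; intros E.
  - replace (- q k - z k * phi) with (ln (c k / ce k)) by lra.
    rewrite exp_ln by (apply Rdiv_lt_0_compat; lra). field. lra.
  - rewrite E. replace (ce k * exp (- q k - z k * phi) / ce k) with (exp (- q k - z k * phi))
      by (field; lra).
    rewrite ln_exp. ring.
Qed.

Lemma steady_state_iff N z ce (L : nat -> nat -> R) p q A w c v phi :
  (forall k, (k < N)%nat -> 0 < ce k) ->
  (forall x : nat -> R, (exists i, (i < N)%nat /\ x i <> 0) ->
     0 < sumN N (fun i => sumN N (fun j => x i * L i j * x j))) ->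
  (forall i, (i < N)%nat -> sumN N (fun j => L i j * q j) = p i) ->
  0 < A ->
  steady_state N z ce L p A w c v phi <->
  (forall k, (k < N)%nat -> c k = boltzmann z ce q phi k) /\ fpot N z ce q phi < 0 /\
  v = A / - fpot N z ce q phi /\ neg_log_slope (fpot N z ce q) (fpot1 N z ce q) phi = w.
Proof.
  intros Hce Hpd Hq HA. unfold steady_state, piw, neg_log_slope.
  pose proof (sumN_boltzmann N z ce q phi) as Sc.
  pose proof (sumN_z_boltzmann N z ce q phi) as Sz.
  split.
  - intros [Hc [Hv [Hneutral [Hchem Hpiw]]]].
    assert (Hmu : forall k, (k < N)%nat -> mu z ce c phi k + q k = 0).
    { apply (kernel_trivial_of_pos_def N L Hpd (fun k => mu z ce c phi k + q k)).
      intros i Hi. rewrite (sumN_ext N _ (fun j => L i j * mu z ce c phi j + L i j * q j))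
        by (intros; ring).
      rewrite sumN_plus, Hq by exact Hi. apply Hchem, Hi. }
    assert (Ec : forall k, (k < N)%nat -> c k = boltzmann z ce q phi k).
    { intros k Hk. apply mu_eq_iff_boltzmann; auto. pose proof (Hmu k Hk). lra. }
    rewrite (sumN_ext N c _ Ec), Sc in Hpiw.
    rewrite (sumN_ext N _ (fun k => z k * boltzmann z ce q phi k)), Sz in Hneutral
      by (intros k Hk; rewrite Ec; auto).
    assert (Hvol : A / v = - fpot N z ce q phi) by lra.
    assert (0 < A / v) by (apply Rdiv_lt_0_compat; lra).
    split; [exact Ec|split; [lra|split]].
    + rewrite <- Hvol. field. lra.
    + replace (fpot1 N z ce q phi) with (w * (A / v)) by (unfold Rdiv in *; lra).
      rewrite Hvol. field. lra.
  - intros [Ec [Hneg [-> Hw]]].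
    assert (Hmu : forall k, (k < N)%nat -> mu z ce c phi k = - q k).
    { intros k Hk. pose proof (Hce k Hk). pose proof (exp_pos (- q k - z k * phi)).
      apply mu_eq_iff_boltzmann; auto. rewrite Ec by exact Hk. unfold boltzmann. nra. }
    split; [|split; [|split; [|split]]].
    + intros k Hk. rewrite Ec by exact Hk. pose proof (Hce k Hk).
      pose proof (exp_pos (- q k - z k * phi)). unfold boltzmann. nra.
    + apply Rdiv_lt_0_compat; lra.
    + rewrite (sumN_ext N _ (fun k => z k * boltzmann z ce q phi k)), Sz
        by (intros k Hk; rewrite Ec; auto).
      rewrite <- Hw. field. lra.
    + intros i Hi. rewrite (sumN_ext N _ (fun j => - (L i j * q j))).
      * rewrite sumN_opp, Hq by exact Hi. ring.
      * intros j Hj. rewrite Hmu by exact Hj. ring.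
    + rewrite (sumN_ext N c _ Ec), Sc. field. lra.
Qed.

Theorem mainTheorem3
  (N : nat) (z ce : nat -> R) (L : nat -> nat -> R) (p q : nat -> R) (zeta : R)
  (phimin : R)
  (HN : (2 <= N)%nat)
  (Hz : exists k, (k < N)%nat /\ z k <> 0)
  (Hce : forall k, (k < N)%nat -> 0 < ce k)
  (Hneutral : sumN N (fun k => z k * ce k) = 0)
  (HLsym : forall i j, (i < N)%nat -> (j < N)%nat -> L i j = L j i)
  (HLpd : forall x : nat -> R, (exists i, (i < N)%nat /\ x i <> 0) ->
            0 < sumN N (fun i => sumN N (fun j => x i * L i j * x j)))
  (Hzeta : 0 < zeta)
  (Hq : forall i, (i < N)%nat -> sumN N (fun j => L i j * q j) = p i)
  (Hmin : forall phi, fpot N z ce q phimin <= fpot N z ce q phi)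
  (Hneg : fpot N z ce q phimin < 0) :
  exists (V Phi dVA dVQ : R -> R -> R),
    (forall A QA, 0 < A ->
       exists c : nat -> R,
         steady_state N z ce L p A (QA / A) c (V A QA) (Phi A QA) /\
         forall c' v' phi', steady_state N z ce L p A (QA / A) c' v' phi' ->
           (forall k, (k < N)%nat -> c' k = c k) /\ v' = V A QA /\ phi' = Phi A QA) /\
    (forall A QA, 0 < A ->
       derivable_pt_lim (fun a => V a QA) A (dVA A QA) /\
       derivable_pt_lim (fun b => V A b) QA (dVQ A QA) /\
       continuous2_at dVA A QA /\ continuous2_at dVQ A QA) /\
    (forall A QA, 0 < A ->
       let v := V A QA in
       let f2 := fpot2 N z ce q (Phi A QA) in
       let D := (QA / v) ^ 2 + f2 * (A / v) in
       dVA A QA = / D * f2 /\ 0 < dVA A QA /\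
       dVQ A QA = / D * (QA / v)).
Proof.
  pose proof (fpot_deriv N z ce q) as dF.
  pose proof (fpot1_deriv N z ce q) as dF1.
  pose proof (fpot2_pos N z ce q Hce Hz) as F2_pos.
  destruct (fpot_pos_above N z ce q Hce phimin (exists_neg_valence N z ce Hce Hz Hneutral))
    as [M [HM FM]].
  destruct (fpot_pos_below N z ce q phimin Hce (exists_pos_valence N z ce Hce Hz Hneutral))
    as [m [Hm Fm]].
  set (Phi := neg_log_slope_inv _ _ _ dF dF1 F2_pos m phimin M Hm HM Fm Hneg FM).
  pose proof (neg_log_slope_inv_spec _ _ _ dF dF1 F2_pos m phimin M Hm HM Fm Hneg FM) as Phi_spec.
  exists (volume _ _ _ dF dF1 F2_pos m phimin M Hm HM Fm Hneg FM), (fun A Q => Phi (Q / A)),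
    (volume_dA _ _ _ dF dF1 F2_pos m phimin M Hm HM Fm Hneg FM),
    (volume_dQ _ _ _ dF dF1 F2_pos m phimin M Hm HM Fm Hneg FM).
  split; [|split].
  - intros A Q HA. destruct (Phi_spec (Q / A)) as [Hn Hw].
    exists (boltzmann z ce q (Phi (Q / A))). split.
    + apply (steady_state_iff N z ce L p q); auto.
    + intros c' v' phi' Hss.
      apply (steady_state_iff N z ce L p q) in Hss as [Ec [Hn' [-> Hw']]]; auto.
      assert (phi' = Phi (Q / A)) as ->
        by (rewrite <- Hw'; symmetry; apply neg_log_slope_invK, Hn').
      auto.
  - intros A Q HA. split; [|split; [|split]].
    + apply volume_deriv_A, HA.
    + apply volume_deriv_Q, HA.
    + apply continuous2_at_volume_deriv; [apply fpot2_continuous..|exact HA].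
    + apply continuous2_at_volume_deriv;
        [apply fpot2_continuous|apply (F1_continuous _ _ dF1)|exact HA].
  - intros A Q HA.
    exact (volume_deriv_closed_form _ _ _ dF dF1 F2_pos m phimin M Hm HM Fm Hneg FM A Q HA).
Qed.
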